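(* Let $\Gamma$ be a finitely generated group, and let $\{G_n\}$ be a collection of finite groups together with epimorphisms $\phi_n:\Gamma\to G_n$ such that $\bigcap_n \ker\phi_n=1$ (i.e. for every nontrivial $\gamma\in\Gamma$ there is some $n$ with $\phi_n(\gamma)\neq 1$). Assume further that $\Phi(G_n)=1$ for every $n$. Then $\Phi(\Gamma)=\Phi_f(\Gamma)=1$.
   Context: For a group $G$, a maximal subgroup is a proper subgroup maximal with respect to inclusion among proper subgroups. The Frattini subgroup $\Phi(G)$ is the intersection of all maximal subgroups of $G$ if such exist, and $\Phi(G)=G$ otherwise. $\Phi_f(G)$ is the intersection of all maximal subgroups of finite index in $G$ (taken to be $G$ if there are none). *)

From mathcomp Require Import all_boot all_fingroup all_solvable.
Set Implicit Arguments. Unset Strict Implicit. Unset Printing Implicit Defensive.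

Record is_group (T : Type) (mul : T -> T -> T) (inv : T -> T) (one : T) : Prop := {
  grp_assoc : forall x y z, mul x (mul y z) = mul (mul x y) z;
  grp_id_l : forall x, mul one x = x;
  grp_inv_l : forall x, mul (inv x) x = one }.

Section AbstractGroup.
Variables (T : Type) (mul : T -> T -> T) (inv : T -> T) (one : T).

Definition is_subgroup (H : T -> Prop) : Prop :=
  H one /\ (forall x y, H x -> H y -> H (mul x y)) /\ (forall x, H x -> H (inv x)).

Definition is_maximal_subgroup (H : T -> Prop) : Prop :=
  is_subgroup H /\ (exists x, ~ H x) /\
  (forall K, is_subgroup K -> (forall x, H x -> K x) ->
     (exists x, ~ K x) -> forall x, K x -> H x).

(* H has finite index: finitely many left cosets g H cover the group *)
Definition finite_index (H : T -> Prop) : Prop :=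
  exists (k : nat) (r : 'I_k -> T), forall g, exists i, H (mul (inv (r i)) g).

(* Frattini subgroup: intersection of all maximal subgroups
   (the whole group if there are none — an empty intersection). *)
Definition frattini (x : T) : Prop :=
  forall M, is_maximal_subgroup M -> M x.

Definition frattini_f (x : T) : Prop :=
  forall M, is_maximal_subgroup M -> finite_index M -> M x.

Definition finitely_generated : Prop :=
  exists (k : nat) (S : 'I_k -> T), forall H, is_subgroup H ->
    (forall i, H (S i)) -> forall x, H x.

End AbstractGroup.

(* Every maximal subgroup M of G_n pulls back along phi_n to a maximal subgroup
   of finite index of Gamma, so an element x of Phi_f(Gamma) satisfies
   phi_n x \in M for all such M, i.e. phi_n x \in Phi(G_n) = 1 for every n,
   and residual finiteness forces x = 1.  Since Phi(Gamma) \subset Phi_f(Gamma)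
   and both contain 1, both are trivial. *)

From Stdlib Require Import Classical ClassicalEpsilon.
From mathcomp Require Import all_boot all_fingroup all_solvable.

Set Implicit Arguments.
Unset Strict Implicit.
Unset Printing Implicit Defensive.

Definition asbool (P : Prop) : bool :=
  if excluded_middle_informative P then true else false.

Lemma asboolP (P : Prop) : reflect P (asbool P).
Proof.
by rewrite /asbool; case: excluded_middle_informative => h; constructor.
Qed.

Section AbstractGroup.

Variables (T : Type) (mul : T -> T -> T) (inv : T -> T) (one : T).
Hypothesis Tgrp : is_group mul inv one.

Lemma grp_inv_r x : mul x (inv x) = one.
Proof.
case: Tgrp => assoc idl invl.
rewrite -[mul x (inv x)]idl -{1}(invl (inv x)).
by rewrite -assoc (assoc (inv x)) invl idl invl.
Qed.

Lemma grp_id_r x : mul x one = x.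
Proof.
by case: Tgrp => assoc idl invl; rewrite -(invl x) assoc grp_inv_r idl.
Qed.

Lemma frattini_one : frattini mul inv one one.
Proof. by move=> M [[]]. Qed.

Lemma frattini_sub_frattini_f x :
  frattini mul inv one x -> frattini_f mul inv one x.
Proof. by move=> Fx M maxM _; exact: Fx. Qed.

End AbstractGroup.

Section PullbackToFiniteQuotient.

Variables (T : Type) (mul : T -> T -> T) (inv : T -> T) (one : T).
Hypothesis Tgrp : is_group mul inv one.

Variables (gT : finGroupType) (G : {group gT}) (f : T -> gT).
Hypothesis f_morph : forall x y, f (mul x y) = (f x * f y)%g.
Hypothesis f_in : forall x, f x \in G.
Hypothesis f_onto : forall y, y \in G -> exists x, f x = y.

Local Notation is_subgroup := (is_subgroup mul inv one).

Definition morph_preim (M : {set gT}) : T -> Prop := fun t => f t \in M.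

Definition morph_image (K : T -> Prop) : {set gT} :=
  [set z | asbool (exists2 k, K k & f k = z)].

Lemma morph_one : f one = 1%g.
Proof. by apply: (mulgI (f one)); rewrite -f_morph (grp_id_l Tgrp) mulg1. Qed.

Lemma morph_inv x : f (inv x) = (f x)^-1%g.
Proof.
by apply: (mulIg (f x)); rewrite -f_morph (grp_inv_l Tgrp) morph_one mulVg.
Qed.

Lemma morph_preim_subgroup (M : {group gT}) : is_subgroup (morph_preim M).
Proof.
rewrite /morph_preim; split; first by rewrite morph_one group1.
split=> [a b Ma Mb | a Ma]; first by rewrite f_morph groupM.
by rewrite morph_inv groupV.
Qed.

Lemma morph_imageP K z :
  reflect (exists2 k, K k & f k = z) (z \in morph_image K).
Proof. by rewrite inE; apply: asboolP. Qed.

Lemma morph_image_group_set K : is_subgroup K -> group_set (morph_image K).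
Proof.
case=> K1 [KM _]; apply/group_setP; split.
  by apply/morph_imageP; exists one; rewrite ?morph_one.
move=> _ _ /morph_imageP[a Ka <-] /morph_imageP[b Kb <-].
by apply/morph_imageP; exists (mul a b); rewrite ?f_morph //; apply: KM.
Qed.

Lemma morph_image_sub K : morph_image K \subset G.
Proof. by apply/subsetP=> _ /morph_imageP[k _ <-]. Qed.

Lemma mem_morph_image_ker K y :
  is_subgroup K -> (forall t, f t = 1%g -> K t) -> f y \in morph_image K -> K y.
Proof.
case=> _ [KM _] Kker /morph_imageP[k Kk fk].
have Kyk : K (mul y (inv k)) by apply: Kker; rewrite f_morph morph_inv fk mulgV.
suff -> : y = mul (mul y (inv k)) k by apply: KM.
by case: Tgrp => assoc _ invl; rewrite -assoc invl (grp_id_r Tgrp).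
Qed.

Lemma morph_preim_maximal (M : {group gT}) :
  maximal M G -> is_maximal_subgroup mul inv one (morph_preim M).
Proof.
case/maxgroupP=> ltMG maxM.
have [x Mx] : exists x, f x \notin M.
  have [_ [z Gz Mz]] := properP ltMG; have [x fx] := f_onto Gz.
  by exists x; rewrite fx.
split; first exact: morph_preim_subgroup.
split=> [|K sK MK [y Ky] t Kt]; first by exists x; apply/negP.
have imKG := morph_image_group_set sK; pose S := Group imKG.
have sMS : M \subset S.
  apply/subsetP=> z Mz; have [w fw] := f_onto (subsetP (proper_sub ltMG) z Mz).
  by apply/morph_imageP; exists w => //; apply: MK; rewrite /morph_preim fw.
have [ltSG | geSG] := boolP (S \proper G).
  by rewrite /morph_preim -(maxM S ltSG sMS); apply/morph_imageP; exists t.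
case: Ky; apply: mem_morph_image_ker => // [u fu1|].
  by apply: MK; rewrite /morph_preim fu1.
have -> : morph_image K = G.
  by apply/eqP; rewrite eqEproper morph_image_sub geSG.
exact: f_in.
Qed.

Lemma morph_preim_finite_index (M : {group gT}) :
  finite_index mul inv (morph_preim M).
Proof.
exists #|G|.
pose r i :=
  proj1_sig (constructive_indefinite_description _ (f_onto (enum_valP i))).
exists r => g; exists (enum_rank_in (f_in g) (f g)).
rewrite /morph_preim f_morph morph_inv /r.
case: constructive_indefinite_description => w /= ->.
by rewrite enum_rankK_in ?f_in // mulVg group1.
Qed.

Lemma frattini_f_morph_Phi x : frattini_f mul inv one x -> f x \in 'Phi(G)%g.
Proof.
move=> Fx; apply/bigcapP=> M /orP[/eqP -> | maxM]; first exact: f_in.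
exact: Fx (morph_preim_maximal maxM) (morph_preim_finite_index M).
Qed.

End PullbackToFiniteQuotient.

Theorem proposition2p1
  (T : Type) (mul : T -> T -> T) (inv : T -> T) (one : T)
  (Hgrp : is_group mul inv one)
  (Hfg : finitely_generated mul inv one)
  (I : Type) (gT : I -> finGroupType) (G : forall n, {group gT n})
  (phi : forall n, T -> gT n)
  (phi_morph : forall n x y, phi n (mul x y) = (phi n x * phi n y)%g)
  (phi_in : forall n x, phi n x \in G n)
  (phi_onto : forall n y, y \in G n -> exists x, phi n x = y)
  (Hsep : forall x, x <> one -> exists n, phi n x <> 1%g)
  (HPhi : forall n, 'Phi(G n)%g = 1%g) :
  (forall x, frattini mul inv one x <-> x = one) /\
  (forall x, frattini_f mul inv one x <-> x = one).
Proof.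
have Phi_f_trivial x : frattini_f mul inv one x -> x = one.
  move=> Fx; apply: NNPP => x_nt; have [n] := Hsep x x_nt.
  have := frattini_f_morph_Phi Hgrp (phi_morph n) (phi_in n) (phi_onto n) Fx.
  by rewrite HPhi => /set1gP.
split=> x; split=> [Fx | ->].
- exact: Phi_f_trivial (frattini_sub_frattini_f Fx).
- exact: frattini_one.
- exact: Phi_f_trivial.
- by apply: frattini_sub_frattini_f; apply: frattini_one.
Qed.
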